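(* Let $D\in\mathbb{D}^n_+$, $W\in\mathbb{R}^{n\times n}$, $u\in\mathbb{R}^n$, $A:=W-D$, and $\mathcal X=\{x\in\mathbb{R}^n: Dx\in[0,1]^n\}$. (i) A point $x\in\mathcal X$ is an equilibrium of the hard-selector inclusion $x'\in-Dx+\mathcal H(Ax+u)$ (i.e. $0\in-Dx+\mathcal H(Ax+u)$) if and only if it is an equilibrium of the linear-threshold network $\dot x=-Dx+[Wx+u]_0^1$; consequently all members of the family $\dot x=\frac1\tau\left(-Dx+[Dx+\tau(Ax+u)]_0^1\right)$, $\tau>0$, the projected dynamical system $\dot x=\Pi_{\mathcal X}(x,Ax+u)$, and the hard-selector inclusion share the same equilibria in $\mathcal X$. (ii) If $A$ is Lyapunov diagonally stable, the hard-selector inclusion admits a unique equilibrium.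
   Context: $\mathbb{D}^n_+$ is the set of positive diagonal matrices; $[z]_0^1=\max(0,\min(z,1))$ elementwise. $h(z)=\{0\}$ if $z<0$, $[0,1]$ if $z=0$, $\{1\}$ if $z>0$, and $\mathcal H(x)=h(x_1)\times\cdots\times h(x_n)$. $\Pi_{\mathcal X}(x,v)$ is the Euclidean projection of $v$ onto the tangent cone of $\mathcal X$ at $x$. A matrix $M$ is Lyapunov diagonally stable if $M^\top\Lambda+\Lambda M\prec0$ for some $\Lambda\in\mathbb{D}^n_+$. *)

From HB Require Import structures.
From mathcomp Require Import all_boot all_order all_algebra.
From mathcomp Require Import all_classical all_reals all_analysis.
Set Implicit Arguments. Unset Strict Implicit. Unset Printing Implicit Defensive.
Import Order.TTheory GRing.Theory Num.Theory.
Import numFieldTopology.Exports numFieldNormedType.Exports.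
Local Open Scope ring_scope.
Local Open Scope classical_set_scope.

Section Defs.
Variable R : realType.
Variable n : nat.

Definition posdiag (D : 'M[R]_n) : Prop :=
  is_diag_mx D /\ (forall i, 0 < D i i).

Definition sat01 (z : R) : R := Num.max 0 (Num.min z 1).
Definition sat01v (v : 'cV[R]_n) : 'cV[R]_n := map_mx sat01 v.

Definition hsel (z : R) : set R :=
  if z < 0 then [set 0]
  else if z == 0 then [set y | 0 <= y <= 1]
  else [set 1].
Definition Hsel (x : 'cV[R]_n) : set 'cV[R]_n :=
  [set y | forall i, hsel (x i 0) (y i 0)].

Definition Xset (D : 'M[R]_n) : set 'cV[R]_n :=
  [set x | forall i, 0 <= (D *m x) i 0 <= 1].

Definition tcone (S : set 'cV[R]_n) (x : 'cV[R]_n) : set 'cV[R]_n :=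
  closure (T := 'M[R]_(n, 1))
    [set v : 'M[R]_(n, 1) | exists t : R, exists2 y, S y & 0 <= t /\ v = t *: (y - x)].

Definition sqnorm (v : 'cV[R]_n) : R := \sum_i (v i 0) ^+ 2.

Definition is_proj (K : set 'cV[R]_n) (v p : 'cV[R]_n) : Prop :=
  K p /\ (forall q, K q -> sqnorm (v - p) <= sqnorm (v - q)).

Definition PiX_zero (S : set 'cV[R]_n) (x v : 'cV[R]_n) : Prop :=
  is_proj (tcone S x) v 0.

Definition hs_equilibrium (D A : 'M[R]_n) (u x : 'cV[R]_n) : Prop :=
  exists2 y, Hsel (A *m x + u) y & 0 = - (D *m x) + y.
Definition ltn_equilibrium (D W : 'M[R]_n) (u x : 'cV[R]_n) : Prop :=
  0 = - (D *m x) + sat01v (W *m x + u).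
Definition tau_equilibrium (tau : R) (D A : 'M[R]_n) (u x : 'cV[R]_n) : Prop :=
  0 = tau^-1 *: (- (D *m x) + sat01v (D *m x + tau *: (A *m x + u))).
Definition pds_equilibrium (D A : 'M[R]_n) (u x : 'cV[R]_n) : Prop :=
  PiX_zero (Xset D) x (A *m x + u).

Definition negdef (S : 'M[R]_n) : Prop :=
  forall v : 'cV[R]_n, v != 0 -> (v^T *m S *m v) 0 0 < 0.
Definition LDS (M : 'M[R]_n) : Prop :=
  exists2 L : 'M[R]_n, posdiag L & negdef (M^T *m L + L *m M).

End Defs.

(* Coordinatewise, every equilibrium notion says that (Dx)_i in [0, 1] is
   complementary to z_i = (Ax + u)_i: it sits at 0 when z_i < 0 and at 1 when
   z_i > 0.  For the saturated networks this is the fixed-point form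
   d = [d + e z]_0^1 of that condition, valid for every step e > 0; for the
   projected system, 0 = Pi_X(x, z) says that z lies in the polar cone of X at
   x, and since X is a box this decouples coordinatewise.

   In the variable x the condition is a box-constrained linear
   complementarity problem for A.  If A^T L + L A < 0 with L positive
   diagonal, then for a small step e (uniform by compactness of the unit
   sphere) the projected step
   T x = clamp(x + e (Ax + u)) strictly shrinks the L-weighted distance
   between distinct points: clamping is 1-Lipschitz in each coordinate and
   |d + e A d|_L^2 = |d|_L^2 + e (2 <d, A d>_L + e |A d|_L^2).  Hence T has at
   most one fixed point, and a minimiser of the residual |T x - x|_L over the
   compact box is one. *)

From mathcomp Require Import all_boot all_order all_algebra.
From mathcomp Require Import all_classical all_reals all_analysis.
From mathcomp Require Import ring lra.
Import Order.TTheory GRing.Theory Num.Theory.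
Import numFieldTopology.Exports numFieldNormedType.Exports.
Set Implicit Arguments. Unset Strict Implicit. Unset Printing Implicit Defensive.
Local Open Scope ring_scope.
Local Open Scope classical_set_scope.

Section Clamp.
Variable R : realFieldType.
Implicit Types a b e s t x z : R.

Definition clamp a b t := Num.max a (Num.min t b).

Definition box_compl a b x z : Prop :=
  a <= x <= b /\ (z < 0 -> x = a) /\ (0 < z -> x = b).

Lemma clamp_itv a b t : a <= b -> a <= clamp a b t <= b.
Proof. by move=> ab; rewrite /clamp le_max lexx ge_max ab ge_min lexx orbT. Qed.

Lemma clamp_sqr_le a b s t : (clamp a b s - clamp a b t) ^+ 2 <= (s - t) ^+ 2.
Proof.
wlog ts : s t / t <= s.
  move=> H; have [|st] := leP t s; first exact: H.
  by rewrite -sqrrN -[(s - t) ^+ 2]sqrrN !opprB; apply: H; rewrite ltW.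
suff : 0 <= clamp a b s - clamp a b t <= s - t by nra.
rewrite /clamp; case: (leP s b) => sb; case: (leP t b) => tb;
  [case: (leP a s) => sa; case: (leP a t) => ta
  |case: (leP a s) => sa; case: (leP a b) => ta
  |case: (leP a b) => sa; case: (leP a t) => ta
  |case: (leP a b) => sa]; lra.
Qed.

Lemma box_complE a b e x z : a <= b -> 0 < e ->
  box_compl a b x z <-> x = clamp a b (x + e * z).
Proof.
move=> ab e0; rewrite /box_compl /clamp.
have [z0|z0|->] := ltrgtP z 0.
- have ez : e * z < 0 by rewrite pmulr_rlt0.
  split=> [[/andP[ax xb] [/(_ isT) -> _]]|].
    by rewrite min_l ?max_l //; lra.
  case: (leP (x + e * z) b) => h; first case: (leP a (x + e * z)) => h'.
  + by lra.
  + by move=> ->; rewrite lexx ab.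
  + by case: (leP a b); lra.
- have ez : 0 < e * z by rewrite mulr_gt0.
  split=> [[/andP[ax xb] [_ /(_ isT) ->]]|].
    by rewrite min_r ?max_r //; lra.
  case: (leP (x + e * z) b) => h; first case: (leP a (x + e * z)) => h'.
  + by lra.
  + by lra.
  + by rewrite max_r // => ->; rewrite lexx ab.
- rewrite mulr0 addr0; split=> [[/andP[ax xb] _]|->].
    by rewrite min_l // max_r.
  by rewrite le_max lexx ge_max ab ge_min lexx orbT.
Qed.

Lemma box_compl_scale c x z : 0 < c ->
  box_compl 0 1 (c * x) z <-> box_compl 0 c^-1 x z.
Proof.
move=> c0; have c_neq0 : c != 0 by rewrite gt_eqF.
have cx_le1 : (c * x <= 1) = (x <= c^-1) by rewrite -ler_pdivlMl // mulr1.
rewrite /box_compl pmulr_rge0 // cx_le1.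
split=> -[xc [zn zp]]; split=> //; split.
- by move=> /zn /eqP; rewrite mulf_eq0 (negbTE c_neq0) => /eqP.
- by move=> /zp cx1; apply: (mulfI c_neq0); rewrite cx1 divff.
- by move=> /zn ->; rewrite mulr0.
- by move=> /zp ->; rewrite divff.
Qed.

Lemma box_complP a b x z : a <= x <= b ->
  box_compl a b x z <-> (forall y, a <= y <= b -> z * (y - x) <= 0).
Proof.
move=> /[dup] xab /andP[ax xb]; split=> [[_ [zn zp]] y /andP[ay yb]|zxy].
  have [/[dup] /zn -> z0|/[dup] /zp -> z0|->] := ltrgtP z 0; [nra|nra|lra].
split=> //; split=> [z0|z0].
  by have := zxy a; rewrite lexx (le_trans ax xb) => /(_ isT); nra.
by have := zxy b; rewrite lexx (le_trans ax xb) => /(_ isT); nra.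
Qed.
End Clamp.

(* Heine-Borel is only available for row vectors in the library, hence the
   row vectors here and the transposes below. *)
Lemma homogeneous2_le_sphere_max (R : realType) n (f : 'rV[R]_n -> R) (i0 : 'I_n) :
  continuous f -> (forall c v, f (c *: v) = c ^+ 2 * f v) ->
  exists2 v, `|v| = 1 & forall w, f w <= f v * `|w| ^+ 2.
Proof.
move=> f_cont f_hom; pose S := [set v : 'rV[R]_n | `|v| = 1].
have S_compact : compact S.
  apply: bounded_closed_compact.
    by exists 1; split=> // M M1 v /= ->; exact: ltW.
  have := @preimage_closed _ R (Num.norm : 'rV[R]_n -> R) [set 1].
  apply; last exact: closed_eq.
  by move=> v _; exact: norm_continuous.
have S0 : S !=set0.
  pose w : 'rV[R]_n := const_mx 1.
  have w_neq0 : `|w| != 0.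
    rewrite normr_eq0; apply/eqP => /matrixP/(_ ord0 i0)/eqP.
    by rewrite !mxE oner_eq0.
  by exists (`|w|^-1 *: w); rewrite /S /= normrZ normfV normr_id mulVf.
have [v /set_mem Sv v_max] := compact_EVT_max S0 S_compact (continuous_subspaceT f_cont).
exists v => // w; have [->|w_neq0] := eqVneq w 0.
  have f0 : f 0 = 0 by rewrite -(scale0r (0 : 'rV[R]_n)) f_hom expr0n mul0r.
  by rewrite f0 normr0 expr0n mulr0.
have w_gt0 : 0 < `|w| by rewrite normr_gt0.
have w_eq : w = `|w| *: (`|w|^-1 *: w) by rewrite scalerKV ?lt0r_neq0.
rewrite {1}w_eq f_hom mulrC ler_wpM2r ?sqr_ge0 //; apply/v_max/mem_set.
by rewrite /S /= normrZ normfV normr_id mulVf ?lt0r_neq0.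
Qed.

Definition wdot (R : pzRingType) n (l : 'I_n -> R) (v w : 'cV[R]_n) : R :=
  \sum_i l i * v i 0 * w i 0.

Section CoordinateContinuity.
Variables (R : realType) (T : topologicalType) (n : nat).
Implicit Types g h : T -> 'cV[R]_n.

Lemma continuous_trmx_coord i : continuous (fun r : 'rV[R]_n => r^T i 0).
Proof. by under eq_fun do rewrite mxE; exact: coord_continuous. Qed.

Lemma continuous_mulmx_coord m (N : 'M[R]_(m, n)) g i :
  (forall j, continuous (fun t => g t j 0)) -> continuous (fun t => (N *m g t) i 0).
Proof.
move=> g_cont; under eq_fun do rewrite mxE.
apply: continuous_big => [|j _ t]; first exact: add_continuous.
by apply: continuousM; [exact: cst_continuous | exact: g_cont].
Qed.

Lemma continuous_wdot l g h :
  (forall i, continuous (fun t => g t i 0)) -> (forall i, continuous (fun t => h t i 0)) ->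
  continuous (fun t => wdot l (g t) (h t)).
Proof.
move=> g_cont h_cont; apply: continuous_big => [|i _ t]; first exact: add_continuous.
apply: (@continuousM R T (fun x => l i * g x i 0) (fun x => h x i 0)); last exact: h_cont.
by apply: continuousM; [exact: cst_continuous | exact: g_cont].
Qed.

Lemma continuous_submx_coord g h i :
  (forall j, continuous (fun t => g t j 0)) -> (forall j, continuous (fun t => h t j 0)) ->
  continuous (fun t => (g t - h t) i 0).
Proof.
move=> g_cont h_cont; under eq_fun do rewrite !mxE.
by move=> t; apply: continuousB; [exact: g_cont | exact: h_cont].
Qed.

Lemma continuous_clamp a b (s : T -> R) :
  continuous s -> continuous (fun t => clamp a b (s t)).
Proof.
move=> s_cont t; apply: (@continuous_max _ _ (cst a) (fun t => Num.min (s t) b)).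
  exact: cst_continuous.
by apply: continuous_min; [exact: s_cont | exact: cst_continuous].
Qed.

End CoordinateContinuity.

Section BoxLCP.
Variables (R : realType) (n : nat) (M : 'M[R]_n) (q : 'cV[R]_n) (lo hi l : 'I_n -> R).
Hypotheses (lo_le_hi : forall i, lo i <= hi i) (l_gt0 : forall i, 0 < l i).

Definition box_lcp (x : 'cV[R]_n) : Prop :=
  forall i, box_compl (lo i) (hi i) (x i 0) ((M *m x + q) i 0).

Definition proj_step (e : R) (x : 'cV[R]_n) : 'cV[R]_n :=
  \col_i clamp (lo i) (hi i) (x i 0 + e * (M *m x + q) i 0).

Lemma box_lcp_fixpoint e x : 0 < e -> box_lcp x <-> proj_step e x = x.
Proof.
move=> e0; split=> [x_sol | x_fix i].
  apply/matrixP => i j; rewrite ord1 mxE.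
  exact/esym/(box_complE _ _ (lo_le_hi i) e0)/x_sol.
by apply/(box_complE _ _ (lo_le_hi i) e0); rewrite -[in LHS]x_fix mxE.
Qed.

Lemma continuous_proj_step_coord (T : topologicalType) e (g : T -> 'cV[R]_n) i :
  (forall j, continuous (fun t => g t j 0)) ->
  continuous (fun t => proj_step e (g t) i 0).
Proof.
move=> g_cont.
have Mq_cont : continuous (fun t => (M *m g t + q) i 0).
  under eq_fun do rewrite mxE.
  move=> t; apply: (@continuousD R R^o T _ (cst (q i 0))); last exact: cst_continuous.
  by move: t; exact: continuous_mulmx_coord.
under eq_fun do rewrite mxE.
apply: continuous_clamp => t.
apply: (@continuousD R R^o T (fun t => g t i 0)); first exact: g_cont.
by apply: (@continuousM R T (cst e)); [exact: cst_continuous | exact: Mq_cont].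
Qed.

Local Notation wnorm v := (wdot l v v).

Lemma wdotZ a b v w : wdot l (a *: v) (b *: w) = a * b * wdot l v w.
Proof. by rewrite /wdot mulr_sumr; apply: eq_bigr => i _; rewrite !mxE; ring. Qed.

Lemma wnormDZ v w e :
  wnorm (v + e *: w) = wnorm v + e * (2 * wdot l v w + e * wnorm w).
Proof.
rewrite /wdot !mulr_sumr -big_split /= mulr_sumr -big_split /=.
apply: eq_bigr => i _; rewrite !mxE; ring.
Qed.

Lemma proj_step_wnorm_le e x y :
  wnorm (proj_step e x - proj_step e y) <= wnorm (x - y + e *: (M *m (x - y))).
Proof.
apply: ler_sum => i _; rewrite -!mulrA ler_pM2l // -!expr2 mulmxBr !mxE.
apply: le_trans (clamp_sqr_le _ _ _ _) _; rewrite le_eqVlt; apply/orP; left.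
apply/eqP; congr (_ ^+ 2); ring.
Qed.

Lemma wnorm_ge0 v : 0 <= wnorm v.
Proof. by apply: sumr_ge0 => i _; rewrite -mulrA -expr2 mulr_ge0 ?sqr_ge0 ?ltW. Qed.

Hypothesis (M_wneg : forall v, v != 0 -> wdot l v (M *m v) < 0).

Lemma wdot_step_size : exists2 e, 0 < e &
  forall d, d != 0 -> 2 * wdot l d (M *m d) + e * wnorm (M *m d) < 0.
Proof.
have [i0 _|no_index] := pickP (@predT 'I_n); last first.
  by exists 1 => // d /negP[]; apply/eqP/matrixP => i; have := no_index i.
have tr_coord := @continuous_trmx_coord R n.
have M_coord i : continuous (fun r : 'rV[R]_n => (M *m r^T) i 0).
  exact: continuous_mulmx_coord.
have [c c_gt0 Q_le] : exists2 c, 0 < c & forall d, wdot l d (M *m d) <= - c * `|d^T| ^+ 2.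
  pose f (r : 'rV[R]_n) := wdot l r^T (M *m r^T).
  have f_hom a r : f (a *: r) = a ^+ 2 * f r.
    by rewrite /f linearZ /= -scalemxAr wdotZ expr2.
  have [v v_unit f_le] :=
    homogeneous2_le_sphere_max i0 (continuous_wdot tr_coord M_coord) f_hom.
  exists (- f v) => [|d]; last by have := f_le d^T; rewrite opprK /f trmxK.
  by rewrite oppr_gt0 M_wneg // trmx_eq0 -normr_eq0 v_unit oner_neq0.
have [C C_ge0 MQ_le] : exists2 C, 0 <= C & forall d, wnorm (M *m d) <= C * `|d^T| ^+ 2.
  pose f (r : 'rV[R]_n) := wnorm (M *m r^T).
  have f_hom a r : f (a *: r) = a ^+ 2 * f r.
    by rewrite /f linearZ /= -scalemxAr wdotZ expr2.
  have [v _ f_le] :=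
    homogeneous2_le_sphere_max i0 (continuous_wdot M_coord M_coord) f_hom.
  by exists (f v) => [|d]; [exact: wnorm_ge0 | have := f_le d^T; rewrite /f trmxK].
have e_gt0 : 0 < c / (C + 1) by rewrite divr_gt0 //; lra.
exists (c / (C + 1)) => // d d_neq0.
have eC_le : c / (C + 1) * C <= c by rewrite mulrAC ler_pdivrMr ?ler_wpM2l; lra.
have N_gt0 : 0 < `|d^T| ^+ 2 by rewrite exprn_gt0 // normr_gt0 trmx_eq0.
have := ler_wpM2l (ltW e_gt0) (MQ_le d); have := Q_le d.
have := ler_wpM2r (ltW N_gt0) eC_le; have := mulr_gt0 c_gt0 N_gt0.
lra.
Qed.

Lemma proj_step_contraction : exists2 e, 0 < e &
  forall x y, x != y -> wnorm (proj_step e x - proj_step e y) < wnorm (x - y).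
Proof.
have [e e_gt0 e_small] := wdot_step_size.
exists e => // x y; rewrite -subr_eq0 => /e_small d_neg.
apply: le_lt_trans (proj_step_wnorm_le e x y) _.
by rewrite wnormDZ gtrDl pmulr_rlt0.
Qed.

Lemma box_lcp_uniq x y : box_lcp x -> box_lcp y -> x = y.
Proof.
have [e e_gt0 T_contr] := proj_step_contraction.
move=> /(box_lcp_fixpoint _ e_gt0) x_fix /(box_lcp_fixpoint _ e_gt0) y_fix.
by apply/eqP/negPn/negP => /T_contr; rewrite x_fix y_fix ltxx.
Qed.

Lemma box_lcp_exists : exists x, box_lcp x.
Proof.
have [e e_gt0 T_contr] := proj_step_contraction.
pose B := [set r : 'rV[R]_n | forall i, `[lo i, hi i]%classic (r ord0 i)].
have B_compact : compact B.
  by apply: (@rV_compact _ _ (fun i => `[lo i, hi i]%classic)) => i;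
    exact: segment_compact.
have B0 : B !=set0.
  by exists (\row_i lo i) => i; rewrite /= mxE in_itv /= lexx lo_le_hi.
pose residual (r : 'rV[R]_n) := wnorm (proj_step e r^T - r^T).
have residual_cont : continuous residual.
  have tr_coord := @continuous_trmx_coord R n.
  by apply: continuous_wdot => i; apply: continuous_submx_coord => // j;
    exact: continuous_proj_step_coord.
have [r /set_mem Br r_min] :=
  compact_EVT_min B0 B_compact (continuous_subspaceT residual_cont).
exists r^T; apply/(box_lcp_fixpoint _ e_gt0); apply/eqP/negPn/negP => T_moves.
have : residual r <= residual (proj_step e r^T)^T.
  by apply/r_min/mem_set => i; rewrite /= !mxE in_itv /= clamp_itv.
by rewrite /residual trmxK leNgt T_contr.
Qed.

Lemma box_lcp_exists_unique : exists! x, box_lcp x.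
Proof.
have [x x_sol] := box_lcp_exists.
by exists x; split=> // y; exact: box_lcp_uniq.
Qed.

End BoxLCP.

Lemma mul_diag_mx_coord (R : pzSemiRingType) m n (D : 'M[R]_m) (x : 'M[R]_(m, n)) i j :
  is_diag_mx D -> (D *m x) i j = D i i * x i j.
Proof.
move=> D_diag; rewrite mxE (bigD1 i) //= big1 ?addr0 // => k ki.
by rewrite (is_diag_mxP D_diag) ?mul0r // eq_sym.
Qed.

Lemma quadform_lyap_diag (R : comPzRingType) n (M L : 'M[R]_n) v : is_diag_mx L ->
  (v^T *m (M^T *m L + L *m M) *m v) 0 0 = 2 * wdot (fun i => L i i) v (M *m v).
Proof.
move=> L_diag; have L_sym : L^T = L.
  apply/matrixP => i j; rewrite mxE; have [->|ij] := eqVneq i j => //.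
  by rewrite !(is_diag_mxP L_diag) // eq_sym.
rewrite mulmxDr mulmxDl mxE.
have -> : v^T *m (M^T *m L) *m v = (v^T *m (L *m M) *m v)^T.
  by rewrite !trmx_mul trmxK L_sym !mulmxA.
rewrite [_^T 0 0]mxE mulr2n mulrDl mul1r -mulmxA mxE /wdot.
by congr (_ + _); apply: eq_bigr => i _;
  rewrite [v^T _ _]mxE -mulmxA mul_diag_mx_coord // mulrCA mulrA.
Qed.

Section Equilibria.
Variables (R : realType) (n : nat).
Implicit Types (D A : 'M[R]_n) (u v w x y z : 'cV[R]_n).

Lemma hselE (z d : R) : hsel z d <-> box_compl 0 1 d z.
Proof.
rewrite /hsel /box_compl; have [z0|z0|z0] := ltrgtP z 0.
- by split=> [->|[_ [/(_ isT) -> _]]]; rewrite ?lexx ?ler01.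
- by split=> [->|[_ [_ /(_ isT) ->]]]; rewrite ?lexx ?ler01.
- by split=> [|[]].
Qed.

Lemma zero_eq_addNr v w : 0 = - v + w <-> v = w.
Proof.
split=> [/eqP|->]; last by rewrite addNr.
by rewrite eq_sym addrC subr_eq0 => /eqP.
Qed.

Lemma hs_equilibriumE D A u x : hs_equilibrium D A u x <->
  forall i, box_compl 0 1 ((D *m x) i 0) ((A *m x + u) i 0).
Proof.
split=> [[y y_sel /zero_eq_addNr -> i] | x_sol]; first exact/hselE.
by exists (D *m x); [move=> i; exact/hselE | rewrite addNr].
Qed.

Lemma sat01v_addZ v w e i : sat01v (v + e *: w) i 0 = sat01 (v i 0 + e * w i 0).
Proof. by rewrite !mxE. Qed.

Lemma hs_equilibrium_sat01E D A u x e : 0 < e -> hs_equilibrium D A u x <->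
  0 = - (D *m x) + sat01v (D *m x + e *: (A *m x + u)).
Proof.
move=> e_gt0; rewrite hs_equilibriumE zero_eq_addNr.
split=> [x_sol | x_fix i].
  apply/matrixP => i j; rewrite ord1 sat01v_addZ.
  exact/(box_complE _ _ ler01 e_gt0).
apply/(box_complE _ _ ler01 e_gt0).
by have := congr1 (fun v : 'cV[R]_n => v i 0) x_fix; rewrite /= sat01v_addZ.
Qed.

Lemma hs_equilibrium_box_lcp D A u x : posdiag D ->
  hs_equilibrium D A u x <-> box_lcp A u (fun=> 0) (fun i => (D i i)^-1) x.
Proof.
move=> [D_diag D_pos]; rewrite hs_equilibriumE.
by split=> x_sol i; have := x_sol i; rewrite mul_diag_mx_coord // box_compl_scale.
Qed.

Definition dotv v w : R := \sum_i v i 0 * w i 0.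

Lemma dotvZr v a w : dotv v (a *: w) = a * dotv v w.
Proof. by rewrite /dotv mulr_sumr; apply: eq_bigr => i _; rewrite mxE mulrCA. Qed.

Lemma sqnorm_ge0 v : 0 <= sqnorm v.
Proof. by apply: sumr_ge0 => i _; exact: sqr_ge0. Qed.

Lemma sqnormZ a v : sqnorm (a *: v) = a ^+ 2 * sqnorm v.
Proof. by rewrite /sqnorm mulr_sumr; apply: eq_bigr => i _; rewrite mxE exprMn. Qed.

Lemma sqnormB v w : sqnorm (v - w) = sqnorm v - 2 * dotv v w + sqnorm w.
Proof.
rewrite /sqnorm /dotv mulr_sumr -sumrB -big_split /=.
by apply: eq_bigr => i _; rewrite !mxE; ring.
Qed.

Lemma continuous_dotv v : continuous (dotv v).
Proof.
apply: continuous_big => [|i _ w]; first exact: add_continuous.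
by apply: continuousM; [exact: cst_continuous | exact: coord_continuous].
Qed.

Lemma PiX_zeroP (S : set 'cV[R]_n) x z : S x ->
  PiX_zero S x z <-> forall y, S y -> dotv z (y - x) <= 0.
Proof.
move=> Sx; split=> [[_ z_min] y Sy | z_polar].
  rewrite leNgt; apply/negP => zv_gt0; set v := y - x in zv_gt0.
  set s := dotv z v / (sqnorm v + 1).
  have v_ge0 := sqnorm_ge0 v.
  have s_gt0 : 0 < s by rewrite divr_gt0 //; lra.
  have sv_tcone : tcone S x (s *: v).
    by apply: subset_closure; exists s; exists y => //; split=> //; exact: ltW.
  have := z_min _ sv_tcone; rewrite subr0 sqnormB dotvZr sqnormZ.
  have : s * (sqnorm v + 1) = dotv z v by rewrite divfK //; lra.
  nra.
split=> [|w w_tcone].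
  by apply: subset_closure; exists 0; exists x; rewrite ?scale0r ?lexx.
rewrite subr0 sqnormB; suff : dotv z w <= 0 by have := sqnorm_ge0 w; lra.
have polar_closed : closed [set w | dotv z w <= 0].
  apply: (@preimage_closed _ R (dotv z) [set r | r <= 0]); last exact: closed_le.
  by move=> ? _; exact: continuous_dotv.
have feasible_polar : [set v | exists t, exists2 y, S y & 0 <= t /\ v = t *: (y - x)]
    `<=` [set w | dotv z w <= 0].
  move=> _ [t [y Sy [t_ge0 ->]]]; rewrite /= dotvZr.
  by apply: mulr_ge0_le0 => //; exact: z_polar.
by have := closureS feasible_polar w_tcone; rewrite -(closure_id _).1.
Qed.

Lemma box_polarE (lo hi : 'I_n -> R) x z : (forall i, lo i <= x i 0 <= hi i) ->
  (forall y, (forall i, lo i <= y i 0 <= hi i) -> dotv z (y - x) <= 0) <->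
  (forall i, box_compl (lo i) (hi i) (x i 0) (z i 0)).
Proof.
move=> x_box; split=> [z_polar i | x_sol y y_box].
  apply/(box_complP _ (x_box i)) => s s_itv.
  pose y := \col_j (if j == i then s else x j 0).
  have y_box j : lo j <= y j 0 <= hi j by rewrite mxE; case: eqP => [->|] // _; exact: x_box.
  have := z_polar y y_box; rewrite /dotv (bigD1 i) //= big1 => [|j ji].
    by rewrite !mxE eqxx addr0.
  by rewrite !mxE (negbTE ji) subrr mulr0.
apply: sumr_le0 => i _; rewrite !mxE.
by apply: (box_complP _ (x_box i)).1; [exact: x_sol | exact: y_box].
Qed.

Lemma XsetE D y : posdiag D -> Xset D y <-> forall i, 0 <= y i 0 <= (D i i)^-1.
Proof.
move=> [D_diag D_pos]; rewrite /Xset /=.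
split=> y_X i; have := y_X i;
  by rewrite mul_diag_mx_coord // pmulr_rge0 // -ler_pdivlMl // mulr1.
Qed.

Lemma pds_equilibrium_box_lcp D A u x : posdiag D -> Xset D x ->
  pds_equilibrium D A u x <-> box_lcp A u (fun=> 0) (fun i => (D i i)^-1) x.
Proof.
move=> D_pos x_X; rewrite /pds_equilibrium PiX_zeroP //.
rewrite /box_lcp -(box_polarE _ ((XsetE _ D_pos).1 x_X)).
by split=> z_polar y /(XsetE _ D_pos) y_X; exact: z_polar.
Qed.

End Equilibria.

Theorem proposition7 (R : realType) (n : nat) (D W : 'M[R]_n) (u : 'cV[R]_n) :
  posdiag D ->
  let A := W - D in
  (forall x : 'cV[R]_n, Xset D x ->
     (hs_equilibrium D A u x <-> ltn_equilibrium D W u x)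
     /\ (forall tau : R, 0 < tau ->
           (tau_equilibrium tau D A u x <-> hs_equilibrium D A u x))
     /\ (pds_equilibrium D A u x <-> hs_equilibrium D A u x))
  /\ (LDS A -> exists! x : 'cV[R]_n, hs_equilibrium D A u x).
Proof.
move=> D_pos A; have D_inv_ge0 i : 0 <= (D i i)^-1 by rewrite invr_ge0 ltW //; case: D_pos.
split=> [x x_X | [L [L_diag L_pos] L_neg]].
  split; [|split].
  - rewrite /ltn_equilibrium; have -> : W *m x + u = D *m x + 1 *: (A *m x + u).
      by rewrite scale1r /A mulmxBl addrA [D *m x + _]addrC subrK.
    exact: hs_equilibrium_sat01E.
  - move=> tau tau_gt0; rewrite (hs_equilibrium_sat01E _ _ _ _ tau_gt0).
    rewrite /tau_equilibrium; split=> [/esym/eqP|<-]; last by rewrite scaler0.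
    by rewrite scaler_eq0 invr_eq0 gt_eqF //= => /eqP.
  - by rewrite pds_equilibrium_box_lcp // hs_equilibrium_box_lcp.
have A_wneg v : v != 0 -> wdot (fun i => L i i) v (A *m v) < 0.
  by move=> /L_neg; rewrite quadform_lyap_diag // pmulr_rlt0.
have [x [x_sol x_uniq]] := box_lcp_exists_unique u D_inv_ge0 L_pos A_wneg.
exists x; split=> [|y]; first exact/hs_equilibrium_box_lcp.
by move=> /(hs_equilibrium_box_lcp _ _ _ D_pos); exact: x_uniq.
Qed.
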